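(* Let $\mathcal{I}\in\mathrm{Ins}(\Omega,\mathcal{H},\mathcal{K})$ be an instrument, $\mathsf{B}\in\mathcal{O}(\Lambda,\mathcal{H})$ a POVM and $\mathcal{J}^{\mathsf{B}}\in\mathrm{Ins}(\Lambda,\mathcal{H},\mathcal{V})$ a measure-and-prepare instrument which measures $\mathsf{B}$. Then $\mathcal{I}$ and $\mathcal{J}^{\mathsf{B}}$ are compatible if and only if $\mathcal{I}\preceq\mathcal{I}^{\mathsf{B}}$, where $\mathcal{I}^{\mathsf{B}}$ is the Lüders instrument of $\mathsf{B}$.
   Context: All Hilbert spaces are finite-dimensional and complex, and all outcome sets are finite. A POVM $\mathsf{B}\in\mathcal{O}(\Lambda,\mathcal{H})$ is a map $y\mapsto\mathsf{B}(y)$ to positive operators with $\sum_y\mathsf{B}(y)=I$. An instrument $\mathcal{I}\in\mathrm{Ins}(\Omega,\mathcal{H},\mathcal{K})$ is a family $(\mathcal{I}_x)_{x\in\Omega}$ of completely positive trace-nonincreasing linear maps $\mathcal{L}(\mathcal{H})\to\mathcal{L}(\mathcal{K})$ whose sum is trace preserving. $\mathcal{J}^{\mathsf{B}}$ measure-and-prepare measuring $\mathsf{B}$ means $\mathcal{J}^{\mathsf{B}}_y(\varrho)=\mathrm{tr}[\mathsf{B}(y)\varrho]\xi_y$ for some states $\{\xi_y\}_{y\in\Lambda}$ on $\mathcal{V}$. The Lüders instrument is $\mathcal{I}^{\mathsf{B}}\in\mathrm{Ins}(\Lambda,\mathcal{H},\mathcal{H})$, $\mathcal{I}^{\mathsf{B}}_y(\varrho)=\sqrt{\mathsf{B}(y)}\varrho\sqrt{\mathsf{B}(y)}$.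 Postprocessing: $\mathcal{I}\preceq\mathcal{I}^{\mathsf{B}}$ if there exist instruments $\mathcal{R}^{(y)}\in\mathrm{Ins}(\Omega,\mathcal{H},\mathcal{K})$, $y\in\Lambda$, with $\mathcal{I}_x=\sum_y\mathcal{R}^{(y)}_x\circ\mathcal{I}^{\mathsf{B}}_y$ for all $x$. Two instruments $\mathcal{I}\in\mathrm{Ins}(\Omega,\mathcal{H},\mathcal{K})$, $\mathcal{J}\in\mathrm{Ins}(\Lambda,\mathcal{H},\mathcal{V})$ are compatible if there is $\mathcal{G}\in\mathrm{Ins}(\Omega\times\Lambda,\mathcal{H},\mathcal{K}\otimes\mathcal{V})$ with $\sum_{x}\mathrm{tr}_{\mathcal{K}}[\mathcal{G}_{(x,y)}(\varrho)]=\mathcal{J}_y(\varrho)$ for all $y$ and $\sum_y\mathrm{tr}_{\mathcal{V}}[\mathcal{G}_{(x,y)}(\varrho)]=\mathcal{I}_x(\varrho)$ for all $x$, for all states $\varrho$. *)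

From mathcomp Require Import all_boot all_algebra.
From mathcomp Require Import reals.
From mathcomp Require Import complex mxtens.

Set Implicit Arguments.
Unset Strict Implicit.
Unset Printing Implicit Defensive.

Import GRing.Theory Num.Theory.
Local Open Scope ring_scope.

Section QuantumDefs.
Variable C : numClosedFieldType.

(* Hilbert space C^n ; L(C^n) = 'M[C]_n. *)

Definition adjmx {p q : nat} (A : 'M[C]_(p, q)) : 'M[C]_(q, p) :=
  (map_mx Num.conj A)^T.

Definition psdmx {n : nat} (A : 'M[C]_n) : Prop :=
  A = adjmx A /\ forall v : 'cV[C]_n, 0 <= (adjmx v *m A *m v) 0 0.

Definition is_state {n : nat} (rho : 'M[C]_n) : Prop :=
  psdmx rho /\ \tr rho = 1.

Definition is_povm {Lam : finType} {n : nat} (B : Lam -> 'M[C]_n) : Prop :=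
  (forall y, psdmx (B y)) /\ \sum_(y : Lam) B y = 1%:M.

Definition is_linear_map {n m : nat} (f : 'M[C]_n -> 'M[C]_m) : Prop :=
  forall (a : C) (A B : 'M[C]_n), f (a *: A + B) = a *: f A + f B.

(* C^k (x) C^n is C^(k*n), with the index convention of tensmx
   (mxtens_index (i, a) = i * n + a). *)
Definition blockmx {k n : nat} (X : 'M[C]_(k * n)) (i j : 'I_k) : 'M[C]_n :=
  \matrix_(a, b) X (mxtens_index (i, a)) (mxtens_index (j, b)).

(* the ampliation id_{M_k} (x) f *)
Definition ampl (k : nat) {n m : nat} (f : 'M[C]_n -> 'M[C]_m)
    (X : 'M[C]_(k * n)) : 'M[C]_(k * m) :=
  \sum_(i < k) \sum_(j < k) (delta_mx i j *t f (blockmx X i j)).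
Arguments ampl k {n m} f X.

Definition is_cp {n m : nat} (f : 'M[C]_n -> 'M[C]_m) : Prop :=
  forall (k : nat) (X : 'M[C]_(k * n)), psdmx X -> psdmx (ampl k f X).

Definition is_instrument {Om : finType} {n m : nat}
    (I : Om -> 'M[C]_n -> 'M[C]_m) : Prop :=
  [/\ forall x, is_linear_map (I x),
      forall x, is_cp (I x),
      forall x (rho : 'M[C]_n), psdmx rho -> \tr (I x rho) <= \tr rho
    & forall A : 'M[C]_n, \tr (\sum_(x : Om) I x A) = \tr A].

Definition is_measure_and_prepare {Lam : finType} {n v : nat}
    (B : Lam -> 'M[C]_n) (J : Lam -> 'M[C]_n -> 'M[C]_v) : Prop :=
  exists xi : Lam -> 'M[C]_v,
    (forall y, is_state (xi y)) /\
    (forall y (A : 'M[C]_n), J y A = \tr (B y *m A) *: xi y).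

Definition is_psd_sqrt {n : nat} (S A : 'M[C]_n) : Prop :=
  psdmx S /\ S *m S = A.

(* Lueders instrument of B, given sqrtB y = sqrt (B y) *)
Definition luders {Lam : finType} {n : nat} (sqrtB : Lam -> 'M[C]_n)
    (y : Lam) (rho : 'M[C]_n) : 'M[C]_n :=
  sqrtB y *m rho *m sqrtB y.

Definition postprocessing {Om Lam : finType} {n m : nat}
    (I : Om -> 'M[C]_n -> 'M[C]_m) (L : Lam -> 'M[C]_n -> 'M[C]_n) : Prop :=
  exists Rr : Lam -> Om -> 'M[C]_n -> 'M[C]_m,
    (forall y, is_instrument (Rr y)) /\
    (forall x (A : 'M[C]_n), I x A = \sum_(y : Lam) Rr y x (L y A)).

Definition ptrace2 {m v : nat} (Y : 'M[C]_(m * v)) : 'M[C]_m :=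
  \matrix_(a, b) \sum_(c < v) Y (mxtens_index (a, c)) (mxtens_index (b, c)).
Definition ptrace1 {m v : nat} (Y : 'M[C]_(m * v)) : 'M[C]_v :=
  \matrix_(c, d) \sum_(a < m) Y (mxtens_index (a, c)) (mxtens_index (a, d)).

Definition compatible {Om Lam : finType} {n m v : nat}
    (I : Om -> 'M[C]_n -> 'M[C]_m) (J : Lam -> 'M[C]_n -> 'M[C]_v) : Prop :=
  exists G : (Om * Lam)%type -> 'M[C]_n -> 'M[C]_(m * v),
    [/\ is_instrument G,
        forall (rho : 'M[C]_n), is_state rho -> forall y : Lam,
          \sum_(x : Om) ptrace1 (G (x, y) rho) = J y rho
      & forall (rho : 'M[C]_n), is_state rho -> forall x : Om,
          \sum_(y : Lam) ptrace2 (G (x, y) rho) = I x rho].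

End QuantumDefs.

From mathcomp Require Import all_boot all_order all_algebra.
From mathcomp Require Import reals.
From mathcomp Require Import complex mxtens.

Set Implicit Arguments.
Unset Strict Implicit.
Unset Printing Implicit Defensive.

Import Order.TTheory GRing.Theory Num.Theory.
Local Open Scope ring_scope.

(* If [I_x = \sum_y R^(y)_x o I^B_y], then [G_(x,y)(rho) = R^(y)_x(sqrt(B_y) rho
   sqrt(B_y)) (x) xi_y] is a joint instrument with marginals [I] and [J^B].
   Conversely, given a joint instrument [G], put [F_(x,y) = tr_V o G_(x,y)]. Then
   [\sum_y F_(x,y) = I_x] and [\sum_x tr F_(x,y)(rho) = tr (B_y rho)], so the
   positive map [F_(x,y)] is dominated in trace by [tr (B_y .)] and therefore only
   sees the support projection [P_y] of [sqrt(B_y)]: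
   [F_(x,y)(rho) = F_(x,y)(P_y rho P_y)]. With [T_y] the pseudo-inverse of
   [sqrt(B_y)], the instruments
   [R^(y)_x(rho) = F_(x,y)(T_y rho T_y) + I_x((1 - P_y) rho (1 - P_y))]
   postprocess the Lueders instrument into [I]. *)

Section Adjoint.
Variable C : numClosedFieldType.
Implicit Types (a : C) (p q r : nat).

Lemma adjmxE p q (A : 'M[C]_(p, q)) i j : adjmx A i j = (A j i)^*.
Proof. by rewrite !mxE. Qed.

Lemma adjmxK p q (A : 'M[C]_(p, q)) : adjmx (adjmx A) = A.
Proof. by apply/matrixP=> i j; rewrite !adjmxE conjCK. Qed.

Lemma adjmxM p q r (A : 'M[C]_(p, q)) (B : 'M[C]_(q, r)) :
  adjmx (A *m B) = adjmx B *m adjmx A.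
Proof.
apply/matrixP=> i j; rewrite adjmxE !mxE rmorph_sum; apply: eq_bigr=> k _.
by rewrite !adjmxE rmorphM mulrC.
Qed.

Lemma adjmxD p q (A B : 'M[C]_(p, q)) : adjmx (A + B) = adjmx A + adjmx B.
Proof. by apply/matrixP=> i j; rewrite !mxE rmorphD. Qed.

Lemma adjmxB p q (A B : 'M[C]_(p, q)) : adjmx (A - B) = adjmx A - adjmx B.
Proof. by apply/matrixP=> i j; rewrite !mxE rmorphB. Qed.

Lemma adjmxZ p q a (A : 'M[C]_(p, q)) : adjmx (a *: A) = a^* *: adjmx A.
Proof. by apply/matrixP=> i j; rewrite !mxE rmorphM. Qed.

Lemma adjmx0 p q : adjmx (0 : 'M[C]_(p, q)) = 0.
Proof. by apply/matrixP=> i j; rewrite !mxE rmorph0. Qed.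

Lemma adjmx1 p : adjmx (1%:M : 'M[C]_p) = 1%:M.
Proof. by apply/matrixP=> i j; rewrite !mxE eq_sym rmorph_nat. Qed.

Lemma adjmx_sum p q (I : finType) (F : I -> 'M[C]_(p, q)) :
  adjmx (\sum_i F i) = \sum_i adjmx (F i).
Proof.
apply/matrixP=> i j; rewrite adjmxE !summxE rmorph_sum.
by apply: eq_bigr=> k _; rewrite adjmxE.
Qed.

Lemma adjmx_delta p q (i : 'I_p) (j : 'I_q) :
  adjmx (delta_mx i j : 'M[C]_(p, q)) = delta_mx j i.
Proof. by apply/matrixP=> a b; rewrite !mxE rmorph_nat andbC. Qed.

Lemma adjmx_conjmx p q (A : 'M[C]_(p, q)) : adjmx A = map_mx Num.conj A^T.
Proof. by apply/matrixP=> i j; rewrite !mxE. Qed.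

End Adjoint.

Section Positive.
Variable C : numClosedFieldType.
Implicit Types (a : C) (n p : nat).

Definition qform n (A : 'M[C]_n) (w : 'cV[C]_n) : C := (adjmx w *m A *m w) 0 0.

Lemma qformD n (A B : 'M[C]_n) w : qform (A + B) w = qform A w + qform B w.
Proof. by rewrite /qform mulmxDr mulmxDl mxE. Qed.

Lemma qformZ n a (A : 'M[C]_n) w : qform (a *: A) w = a * qform A w.
Proof. by rewrite /qform -scalemxAr -scalemxAl mxE. Qed.

Lemma qform_conj n p (M : 'M[C]_(p, n)) (A : 'M[C]_n) w :
  qform (M *m A *m adjmx M) w = qform A (adjmx M *m w).
Proof. by rewrite /qform adjmxM adjmxK !mulmxA. Qed.

Lemma delta_qformE n (A : 'M[C]_n) i j :
  (adjmx (delta_mx i (0 : 'I_1)) *m A *m delta_mx j (0 : 'I_1)) 0 0 = A i j.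
Proof. by rewrite adjmx_delta -rowE -colE !mxE. Qed.

Lemma qformDZ n (A : 'M[C]_n) u w a :
  qform A (u + a *: w) = qform A u + a * (adjmx u *m A *m w) 0 0
     + a^* * (adjmx w *m A *m u) 0 0 + a^* * a * qform A w.
Proof.
rewrite /qform adjmxD adjmxZ !mulmxDl !mulmxDr.
by rewrite -!scalemxAl -!scalemxAr !mxE !addrA mulrA.
Qed.

(* Polarization: the values of [qform A] at [e_i + e_j] and [e_i + 'i e_j] recover [A i j]. *)
Lemma qform_eq0 n (A : 'M[C]_n) : (forall w, qform A w = 0) -> A = 0.
Proof.
move=> A0; have Aii i : A i i = 0 by rewrite -delta_qformE; apply: A0.
apply/matrixP=> i j; rewrite mxE.
have := A0 (delta_mx i 0 + 1 *: delta_mx j 0).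
have := A0 (delta_mx i 0 + 'i *: delta_mx j 0).
rewrite !qformDZ /qform !delta_qformE !Aii !mulr0 !addr0 add0r conjCi rmorph1 !mul1r.
move=> Ei E1.
have Aij_sym : A i j = A j i.
  have : 'i * (A i j - A j i) = 0 by rewrite mulrBr -Ei mulNr.
  by move/eqP; rewrite mulf_eq0 (negbTE (neq0Ci _)) subr_eq0 => /eqP.
by move: E1; rewrite add0r -Aij_sym -mulr2n => /eqP; rewrite mulrn_eq0 => /eqP.
Qed.

Lemma psdmx0 n : psdmx (0 : 'M[C]_n).
Proof. by split=> [|w]; rewrite ?adjmx0 // mulmx0 mul0mx mxE. Qed.

Lemma psdmxD n (A B : 'M[C]_n) : psdmx A -> psdmx B -> psdmx (A + B).
Proof.
move=> [hA pA] [hB pB]; split; first by rewrite adjmxD -hA -hB.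
by move=> w; rewrite -/(qform _ _) qformD addr_ge0 ?pA ?pB.
Qed.

Lemma psdmxZ n a (A : 'M[C]_n) : 0 <= a -> psdmx A -> psdmx (a *: A).
Proof.
move=> a0 [hA pA]; split; first by rewrite adjmxZ -hA conj_Creal ?ger0_real.
by move=> w; rewrite -/(qform _ _) qformZ mulr_ge0 ?pA.
Qed.

Lemma psdmx_sum n (I : finType) (F : I -> 'M[C]_n) :
  (forall i, psdmx (F i)) -> psdmx (\sum_i F i).
Proof. by move=> pF; apply: (big_ind (@psdmx C n)) => //; [apply: psdmx0 | apply: psdmxD]. Qed.

Lemma psdmx_conj n p (M : 'M[C]_(p, n)) (A : 'M[C]_n) :
  psdmx A -> psdmx (M *m A *m adjmx M).
Proof.
move=> [hA pA]; split; first by rewrite !adjmxM adjmxK -hA mulmxA.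
by move=> w; rewrite -/(qform _ _) qform_conj; apply: pA.
Qed.

Lemma psdmx_herm n (A : 'M[C]_n) : psdmx A -> adjmx A = A.
Proof. by case=> hA _; rewrite -hA. Qed.

Lemma psdmx_diag_ge0 n (A : 'M[C]_n) i : psdmx A -> 0 <= A i i.
Proof. by case=> _ /(_ (delta_mx i 0)); rewrite delta_qformE. Qed.

Lemma mxtrace_sum n (I : finType) (F : I -> 'M[C]_n) :
  \tr (\sum_i F i) = \sum_i \tr (F i).
Proof. exact: raddf_sum. Qed.

Lemma mxtrace_sandwichC n (X Y Z : 'M[C]_n) :
  \tr (X *m (Y *m Z *m Y)) = \tr (Z *m (Y *m X *m Y)).
Proof. by rewrite mxtrace_mulC -!mulmxA mxtrace_mulC -!mulmxA. Qed.

Lemma psdmx_tr_ge0 n (A : 'M[C]_n) : psdmx A -> 0 <= \tr A.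
Proof. by move=> pA; apply: sumr_ge0 => i _; apply: psdmx_diag_ge0. Qed.

Lemma psdmx_rank1 n (w : 'cV[C]_n) : psdmx (w *m adjmx w).
Proof.
split=> [|u]; first by rewrite adjmxM adjmxK.
have -> : adjmx u *m (w *m adjmx w) *m u = (adjmx u *m w) *m adjmx (adjmx u *m w).
  by rewrite adjmxM adjmxK !mulmxA.
by rewrite mxE big_ord1 adjmxE mul_conjC_ge0.
Qed.

End Positive.

Section FunctionalCalculus.
Variables (C : numClosedFieldType) (n : nat) (A : 'M[C]_n).
Hypothesis psdA : psdmx A.

Local Notation U := (spectralmx A).
Local Notation d := (spectral_diag A).

Lemma spectralmx_adjr : U *m adjmx U = 1%:M.
Proof. by rewrite adjmx_conjmx; apply/unitarymxP/spectral_unitarymx. Qed.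

Lemma psdmx_spectralE : A = adjmx U *m diag_mx d *m U.
Proof.
have /orthomx_spectralP {1}-> : A \is normalmx.
  by apply/normalmxP; rewrite -adjmx_conjmx psdmx_herm.
by rewrite invmx_unitary ?spectral_unitarymx // adjmx_conjmx.
Qed.

Lemma spectral_diagE : U *m A *m adjmx U = diag_mx d.
Proof.
move: spectralmx_adjr psdmx_spectralE; move: U d => U0 d0 UU0 ->.
by rewrite !mulmxA UU0 mul1mx -mulmxA UU0 mulmx1.
Qed.

Lemma spectral_diag_ge0 i : 0 <= d 0 i.
Proof.
case: psdA => _ /(_ (adjmx U *m delta_mx i 0)); rewrite -/(qform _ _) -qform_conj.
by rewrite spectral_diagE /qform delta_qformE mxE eqxx mulr1n.
Qed.

Definition psdfun (f : C -> C) : 'M[C]_n := adjmx U *m diag_mx (map_mx f d) *m U.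

Lemma psdfunM f g : psdfun f *m psdfun g = psdfun (fun x => f x * g x).
Proof.
rewrite /psdfun !mulmxA -[_ *m U *m adjmx U]mulmxA spectralmx_adjr mulmx1.
rewrite -[_ *m diag_mx _ *m diag_mx _]mulmxA mulmx_diag.
by congr (_ *m diag_mx _ *m _); apply/rowP=> j; rewrite !mxE.
Qed.

Lemma adjmx_psdfun f : adjmx (psdfun f) = psdfun (fun x => (f x)^*).
Proof.
rewrite /psdfun !adjmxM adjmxK mulmxA; congr (_ *m _ *m _).
by apply/matrixP=> i j; rewrite !mxE rmorphMn eq_sym; case: eqP => [->|]; rewrite ?mulr0n.
Qed.

Lemma eq_psdfun f g : {in Num.nneg, f =1 g} -> psdfun f = psdfun g.
Proof.
move=> eq_fg; congr (_ *m diag_mx _ *m _); apply/rowP=> j.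
by rewrite !mxE eq_fg // nnegrE spectral_diag_ge0.
Qed.

Lemma psdfun_id f : {in Num.nneg, f =1 id} -> psdfun f = A.
Proof.
move=> fE; rewrite (eq_psdfun fE) /psdfun map_mx_id //.
by rewrite -psdmx_spectralE.
Qed.

Lemma psdfun_real f : {in Num.nneg, forall x, f x \is Num.real} ->
  adjmx (psdfun f) = psdfun f.
Proof. by move=> fR; rewrite adjmx_psdfun; apply: eq_psdfun => x /fR /conj_Creal. Qed.

End FunctionalCalculus.

Section PositiveFactor.
Variable C : numClosedFieldType.

Lemma psdmx_factor n (A : 'M[C]_n) : psdmx A -> exists K : 'M[C]_n, A = K *m adjmx K.
Proof.
move=> psdA; exists (psdfun A sqrtC).
rewrite adjmx_psdfun psdfunM psdfun_id // => x x0.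
by rewrite conj_Creal ?ger0_real ?sqrtC_ge0 // -expr2 sqrtCK.
Qed.

Lemma psdmx_tr_eq0 n (A : 'M[C]_n) : psdmx A -> \tr A = 0 -> A = 0.
Proof.
move=> /psdmx_factor [K ->] trK0; suff -> : K = 0 by rewrite mul0mx.
have trKE : \tr (K *m adjmx K) = \sum_i \sum_j K i j * (K i j)^*.
  by apply: eq_bigr=> i _; rewrite mxE; apply: eq_bigr=> j _; rewrite adjmxE.
rewrite trKE in trK0; apply/matrixP=> i j; rewrite mxE.
have Kij_ge0 k l : 0 <= K k l * (K k l)^* by apply: mul_conjC_ge0.
have rowK0 := psumr_eq0P (fun k _ => sumr_ge0 _ (fun l _ => Kij_ge0 k l)) trK0.
have /(_ j isT)/eqP := psumr_eq0P (fun l _ => Kij_ge0 i l) (rowK0 i isT).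
by rewrite mul_conjC_eq0 => /eqP.
Qed.

End PositiveFactor.

Section PseudoInverse.
Variables (C : numClosedFieldType) (n : nat) (S : 'M[C]_n).
Hypothesis psdS : psdmx S.

Let psdfunS : psdfun S id = S := psdfun_id psdS (fun _ _ => erefl).

Definition psd_pinv := psdfun S (fun x => x^-1).
Definition psd_supp := psdfun S (fun x => x * x^-1).

Lemma adjmx_psd_pinv : adjmx psd_pinv = psd_pinv.
Proof. by apply: psdfun_real => // x /ger0_real xR; rewrite rpredV. Qed.

Lemma adjmx_psd_supp : adjmx psd_supp = psd_supp.
Proof. by apply: psdfun_real => // x /ger0_real xR; rewrite rpredM ?rpredV. Qed.

Lemma mul_psd_pinv : S *m psd_pinv = psd_supp.
Proof. by rewrite -{1}psdfunS psdfunM. Qed.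

Lemma mul_pinv_psd : psd_pinv *m S = psd_supp.
Proof.
rewrite -{1}psdfunS psdfunM.
by apply: eq_psdfun => // x _; rewrite mulrC.
Qed.

Lemma mul_psd_supp : S *m psd_supp = S.
Proof.
rewrite -{1}psdfunS psdfunM; apply: psdfun_id => // x _.
by have [->|x0] := eqVneq x 0; rewrite ?mul0r // mulrA mulrK ?unitfE.
Qed.

Lemma mul_supp_psd : psd_supp *m S = S.
Proof.
rewrite -{1}psdfunS psdfunM; apply: psdfun_id => // x _.
by have [->|x0] := eqVneq x 0; rewrite ?mul0r // mulrC mulrA mulrK ?unitfE.
Qed.

Lemma psd_supp_idem : psd_supp *m psd_supp = psd_supp.
Proof.
rewrite psdfunM; apply: eq_psdfun => // x _.
by have [->|x0] := eqVneq x 0; rewrite ?mul0r // divff ?mulr1.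
Qed.

End PseudoInverse.

Section LinearMap.
Variables (C : numClosedFieldType) (V : lmodType C) (n : nat).
Variable h : 'M[C]_n -> V.
Hypothesis linh : forall a A B, h (a *: A + B) = a *: h A + h B.

Lemma linear_map0 : h 0 = 0.
Proof.
have := linh 1 0 0; rewrite scaler0 addr0 scale1r => h00.
by apply: (@addrI _ (h 0)); rewrite addr0 -h00.
Qed.

Lemma linear_mapD A B : h (A + B) = h A + h B.
Proof. by have := linh 1 A B; rewrite !scale1r. Qed.

Lemma linear_mapZ a A : h (a *: A) = a *: h A.
Proof. by have := linh a A 0; rewrite !addr0 linear_map0 addr0. Qed.

Lemma linear_map_sum (I : finType) (F : I -> 'M[C]_n) :
  h (\sum_i F i) = \sum_i h (F i).
Proof. exact: (big_morph h linear_mapD linear_map0). Qed.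

Lemma linear_map_psd_eq0 :
  (forall rho, is_state rho -> h rho = 0) -> forall A, psdmx A -> h A = 0.
Proof.
move=> h_states A psdA; have [/(psdmx_tr_eq0 psdA)->|trA0] := eqVneq (\tr A) 0.
  exact: linear_map0.
have -> : A = \tr A *: ((\tr A)^-1 *: A) by rewrite scalerA mulfV // scale1r.
rewrite linear_mapZ h_states ?scaler0 //; split; last by rewrite mxtraceZ mulVf.
by apply: psdmxZ; rewrite ?invr_ge0 ?psdmx_tr_ge0.
Qed.

(* Every matrix unit is a complex combination of the rank-one projections on
   [e_i], [e_j], [e_i + e_j] and [e_i + 'i e_j]. *)
Lemma linear_map_states_eq0 :
  (forall rho, is_state rho -> h rho = 0) -> forall A, h A = 0.
Proof.
move=> /linear_map_psd_eq0 h_psd.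
have h_rank1 (w : 'cV[C]_n) : h (w *m adjmx w) = 0 by apply/h_psd/psdmx_rank1.
have delta_rank1 (i j : 'I_n) :
    delta_mx i (0 : 'I_1) *m adjmx (delta_mx j 0) = delta_mx i j :> 'M[C]_n.
  by rewrite adjmx_delta mul_delta_mx.
have h_delta i j : h (delta_mx i j) = 0.
  have polar c : c^* *: h (delta_mx i j) + c *: h (delta_mx j i) = 0.
    have := h_rank1 (delta_mx i 0 + c *: delta_mx j 0).
    rewrite adjmxD adjmxZ !mulmxDl !mulmxDr -!scalemxAl -!scalemxAr scalerA.
    by rewrite !linear_mapD !linear_mapZ !h_rank1 !delta_rank1 scaler0 !addr0 add0r.
  have := polar 1; rewrite rmorph1 !scale1r => /eqP; rewrite addr_eq0 => /eqP hji.
  have := polar 'i; rewrite conjCi hji scalerN scaleNr opprK -scalerDl => /eqP.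
  rewrite scaler_eq0 -mulr2n mulrn_eq0 (negbTE (neq0Ci _)) /= => /eqP ->.
  by rewrite oppr0.
move=> A; rewrite (matrix_sum_delta A) linear_map_sum big1 // => i _.
by rewrite linear_map_sum big1 // => j _; rewrite linear_mapZ h_delta scaler0.
Qed.

End LinearMap.

Lemma linear_map_sandwich (C : numClosedFieldType) n m (F : 'M[C]_n -> 'M[C]_m)
    (L R : 'M[C]_n) :
  is_linear_map F -> is_linear_map (fun A => F (L *m A *m R)).
Proof. by move=> linF a A B; rewrite mulmxDr mulmxDl -scalemxAr -scalemxAl linF. Qed.

Section TensorIndex.
Variable C : numClosedFieldType.

Lemma mxtens_index_eq m v (x y : 'I_m * 'I_v) :
  (mxtens_index x == mxtens_index y) = (x == y).
Proof. exact/inj_eq/can_inj/mxtens_indexK. Qed.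

Lemma sum_mxtens_index (V : nmodType) m v (F : 'I_(m * v) -> V) :
  \sum_p F p = \sum_(a < m) \sum_(c < v) F (mxtens_index (a, c)).
Proof.
rewrite pair_big /= (reindex (@mxtens_index m v)) /=; last first.
  by exists (@mxtens_unindex m v) => x _; rewrite (mxtens_indexK, mxtens_unindexK).
by apply: eq_bigr => -[a c].
Qed.

Lemma sum_nat_eqMl (T : finType) (p0 : T) (F : T -> C) :
  \sum_p (p == p0)%:R * F p = F p0.
Proof.
by rewrite (bigD1 p0) //= eqxx mul1r big1 ?addr0 // => p /negbTE ->; rewrite mul0r.
Qed.

Lemma sum_nat_eqMr (T : finType) (p0 : T) (F : T -> C) :
  \sum_p F p * (p == p0)%:R = F p0.
Proof. by rewrite -[RHS]sum_nat_eqMl; apply: eq_bigr => p _; rewrite mulrC. Qed.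

Lemma sum_nat_eqZ (V : lmodType C) (T : finType) (p0 : T) (F : T -> V) :
  \sum_p (p == p0)%:R *: F p = F p0.
Proof.
by rewrite (bigD1 p0) //= eqxx scale1r big1 ?addr0 // => p /negbTE ->; rewrite scale0r.
Qed.

(* [tens_embl n i] is the isometry [e_i (x) 1] of [C^n] onto the [i]-th block
   of [C^k (x) C^n]. *)
Definition tens_embl k n (i : 'I_k) : 'M[C]_(k * n, n) :=
  \matrix_(p, a) (p == mxtens_index (i, a))%:R.

Lemma adj_tens_emblE k n (i : 'I_k) a p :
  adjmx (tens_embl n i) a p = (p == mxtens_index (i, a))%:R.
Proof. by rewrite !mxE rmorph_nat. Qed.

Lemma tens_embl_adjM k n (i j : 'I_k) :
  adjmx (tens_embl n i) *m tens_embl n j = (i == j)%:R *: 1%:M.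
Proof.
apply/matrixP=> a b; rewrite !mxE.
under eq_bigr do rewrite adj_tens_emblE mxE.
by rewrite sum_nat_eqMl mxtens_index_eq xpair_eqE; case: (i == j); rewrite ?mul1r ?mul0r.
Qed.

Lemma tens_embl_mulE k n p (i i' : 'I_k) a (Y : 'M[C]_(n, p)) b :
  (tens_embl n i *m Y) (mxtens_index (i', a)) b = (i' == i)%:R * Y a b.
Proof.
rewrite mxE; under eq_bigr do rewrite mxE mxtens_index_eq xpair_eqE.
case: (i' == i) => /=; last by rewrite mul0r big1 // => c _; rewrite mul0r.
by rewrite mul1r; under eq_bigr do rewrite eq_sym; rewrite sum_nat_eqMl.
Qed.

Lemma mul_adj_tens_emblE k n p (j j' : 'I_k) a (Y : 'M[C]_(p, n)) b :
  (Y *m adjmx (tens_embl n j)) a (mxtens_index (j', b)) = Y a b * (j' == j)%:R.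
Proof.
rewrite mxE; under eq_bigr do rewrite adj_tens_emblE mxtens_index_eq xpair_eqE.
case: (j' == j) => /=; last by rewrite mulr0 big1 // => c _; rewrite mulr0.
by rewrite mulr1; under eq_bigr do rewrite eq_sym; rewrite sum_nat_eqMr.
Qed.

Lemma blockmx_tens_emblE k n (X : 'M[C]_(k * n)) i j :
  blockmx X i j = adjmx (tens_embl n i) *m X *m tens_embl n j.
Proof.
apply/matrixP=> a b; rewrite [LHS]mxE [RHS]mxE.
under eq_bigr do rewrite [tens_embl _ _ _ _]mxE.
rewrite sum_nat_eqMr mxE.
by under eq_bigr do rewrite adj_tens_emblE; rewrite sum_nat_eqMl.
Qed.

Lemma tens_delta_emblE k n (i j : 'I_k) (Y : 'M[C]_n) :
  delta_mx i j *t Y = tens_embl n i *m Y *m adjmx (tens_embl n j).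
Proof.
apply/matrixP=> p q.
case: (mxtens_indexP p) => i' a; case: (mxtens_indexP q) => j' b.
rewrite tensmxE mul_adj_tens_emblE tens_embl_mulE mxE.
by case: (i' == i); case: (j' == j); rewrite /= ?mul1r ?mulr1 ?mul0r ?mulr0.
Qed.

End TensorIndex.
Arguments tens_embl {C k} n i.

Section CompletePositivity.
Variable C : numClosedFieldType.

Lemma ampl_tens_emblE k n m (f : 'M[C]_n -> 'M[C]_m) X :
  ampl (k := k) f X = \sum_i \sum_j tens_embl m i
    *m f (adjmx (tens_embl n i) *m X *m tens_embl n j) *m adjmx (tens_embl m j).
Proof.
by apply: eq_bigr => i _; apply: eq_bigr => j _; rewrite tens_delta_emblE blockmx_tens_emblE.
Qed.

Lemma blockmx_ampl k n m (f : 'M[C]_n -> 'M[C]_m) X i j :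
  blockmx (ampl (k := k) f X) i j = f (blockmx X i j).
Proof.
have conj_emb (a b : 'I_k) (Y : 'M[C]_m) :
    adjmx (tens_embl m i) *m (tens_embl m a *m Y *m adjmx (tens_embl m b)) *m tens_embl m j
    = ((a == i)%:R * (b == j)%:R) *: Y.
  rewrite !mulmxA -[_ *m adjmx (tens_embl m b) *m _]mulmxA !tens_embl_adjM.
  by rewrite -!scalemxAl mul1mx -scalemxAr mulmx1 scalerA eq_sym.
rewrite blockmx_tens_emblE ampl_tens_emblE mulmx_sumr mulmx_suml.
under eq_bigr => a _ do rewrite mulmx_sumr mulmx_suml.
under eq_bigr => a _ do under eq_bigr => b _ do rewrite conj_emb -scalerA.
under eq_bigr => a _ do rewrite -scaler_sumr sum_nat_eqZ.
by rewrite sum_nat_eqZ blockmx_tens_emblE.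
Qed.

Lemma eq_cp n m (f g : 'M[C]_n -> 'M[C]_m) : f =1 g -> is_cp g -> is_cp f.
Proof.
move=> fg cpg k X psdX; suff -> : ampl (k := k) f X = ampl (k := k) g X by apply: cpg.
by apply: eq_bigr => i _; apply: eq_bigr => j _; rewrite fg.
Qed.

Lemma cp_comp n m p (f : 'M[C]_m -> 'M[C]_p) (g : 'M[C]_n -> 'M[C]_m) :
  is_cp f -> is_cp g -> is_cp (f \o g).
Proof.
move=> cpf cpg k X psdX.
suff -> : ampl (k := k) (f \o g) X = ampl (k := k) f (ampl (k := k) g X) by apply/cpf/cpg.
by apply: eq_bigr => i _; apply: eq_bigr => j _; rewrite blockmx_ampl.
Qed.

Lemma cp_sum n m (L : finType) (F : L -> 'M[C]_n -> 'M[C]_m) :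
  (forall l, is_cp (F l)) -> is_cp (fun A => \sum_l F l A).
Proof.
move=> cpF k X psdX.
suff -> : ampl (k := k) (fun A => \sum_l F l A) X = \sum_l ampl (k := k) (F l) X.
  by apply: psdmx_sum => l; apply: cpF.
rewrite ampl_tens_emblE.
under eq_bigr => i _ do under eq_bigr => j _ do rewrite mulmx_sumr mulmx_suml.
under eq_bigr => i _ do rewrite exchange_big /=.
by rewrite exchange_big /=; apply: eq_bigr => l _; rewrite ampl_tens_emblE.
Qed.

Lemma cp_add n m (f g : 'M[C]_n -> 'M[C]_m) :
  is_cp f -> is_cp g -> is_cp (fun A => f A + g A).
Proof.
move=> cpf cpg; apply: (@eq_cp _ _ _ (fun A => \sum_(b : bool) if b then f A else g A)).
  by move=> A; rewrite big_bool.
by apply: cp_sum => -[].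
Qed.

Lemma cp_conj n m (K : 'M[C]_(m, n)) : is_cp (fun A => K *m A *m adjmx K).
Proof.
move=> k X psdX.
pose W := \sum_(i < k) tens_embl m i *m K *m adjmx (tens_embl n i).
suff -> : ampl (k := k) (fun A => K *m A *m adjmx K) X = W *m X *m adjmx W.
  exact: psdmx_conj.
rewrite ampl_tens_emblE /W adjmx_sum mulmx_suml mulmx_suml.
apply: eq_bigr => i _; rewrite mulmx_sumr; apply: eq_bigr => j _.
by rewrite !adjmxM !adjmxK !mulmxA.
Qed.

Lemma cp_herm_conj n (S : 'M[C]_n) : adjmx S = S -> is_cp (fun A => S *m A *m S).
Proof. by move=> hS; apply: eq_cp (cp_conj S) => A; rewrite hS. Qed.

Lemma cp_psd n m (f : 'M[C]_n -> 'M[C]_m) X : is_cp f -> psdmx X -> psdmx (f X).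
Proof.
move=> cpf psdX; pose E0 := @tens_embl C 1 n ord0.
have -> : f X = blockmx (ampl (k := 1) f (E0 *m X *m adjmx E0)) ord0 ord0.
  rewrite blockmx_ampl blockmx_tens_emblE !mulmxA tens_embl_adjM -!mulmxA.
  by rewrite tens_embl_adjM scale1r mul1mx mulmx1.
have := psdmx_conj (adjmx (tens_embl m ord0)) (cpf 1 _ (psdmx_conj E0 psdX)).
by rewrite blockmx_tens_emblE adjmxK.
Qed.

Lemma cp_tr_sum_le (Om : finType) n m (F : Om -> 'M[C]_n -> 'M[C]_m) :
  (forall x, is_cp (F x)) -> (forall A, \tr (\sum_x F x A) = \tr A) ->
  forall x rho, psdmx rho -> \tr (F x rho) <= \tr rho.
Proof.
move=> cpF trF x rho psdrho; rewrite -trF mxtrace_sum (bigD1 x) //= lerDl.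
by apply: sumr_ge0 => y _; apply/psdmx_tr_ge0/cp_psd.
Qed.

End CompletePositivity.

Section PartialTrace.
Variables (C : numClosedFieldType) (m v : nat).
Implicit Types (A : 'M[C]_m) (X : 'M[C]_v) (Y : 'M[C]_(m * v)).

(* [tens_embr K l] is [1 (x) K e_l]. *)
Definition tens_embr (K : 'M[C]_v) (l : 'I_v) : 'M[C]_(m * v, m) :=
  \matrix_(p, a) (((mxtens_unindex p).1 == a)%:R * K (mxtens_unindex p).2 l).

Lemma tens_embr_mulE p (K : 'M[C]_v) l (Y : 'M[C]_(m, p)) a c b :
  (tens_embr K l *m Y) (mxtens_index (a, c)) b = K c l * Y a b.
Proof.
rewrite mxE; under eq_bigr do rewrite mxE mxtens_indexK /= -mulrA eq_sym.
by rewrite sum_nat_eqMl.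
Qed.

Lemma mul_adj_tens_embrE p (K : 'M[C]_v) l (Y : 'M[C]_(p, m)) a b d :
  (Y *m adjmx (tens_embr K l)) a (mxtens_index (b, d)) = Y a b * (K d l)^*.
Proof.
rewrite mxE; under eq_bigr do
  rewrite adjmxE mxE mxtens_indexK /= rmorphM rmorph_nat mulrA eq_sym.
by rewrite -mulr_suml sum_nat_eqMr.
Qed.

Lemma tens_embr1E c p a :
  tens_embr 1%:M c p a = (p == mxtens_index (a, c))%:R.
Proof.
case: (mxtens_indexP p) => a' c'.
rewrite !mxE mxtens_indexK mxtens_index_eq xpair_eqE /=.
by case: (a' == a); case: (c' == c); rewrite ?mulr1 ?mulr0 ?mul0r.
Qed.

Lemma ptrace2_tens_embrE Y :
  ptrace2 Y = \sum_c adjmx (tens_embr 1%:M c) *m Y *m tens_embr 1%:M c.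
Proof.
apply/matrixP=> a b; rewrite mxE summxE; apply: eq_bigr => c _.
rewrite mxE; under eq_bigr do rewrite tens_embr1E; rewrite sum_nat_eqMr mxE.
by under eq_bigr do rewrite adjmxE tens_embr1E rmorph_nat; rewrite sum_nat_eqMl.
Qed.

Lemma tensmx_tens_embrE (K : 'M[C]_v) A :
  A *t (K *m adjmx K) = \sum_l tens_embr K l *m A *m adjmx (tens_embr K l).
Proof.
apply/matrixP=> p q.
case: (mxtens_indexP p) => a c; case: (mxtens_indexP q) => b d.
rewrite tensmxE summxE mxE mulr_sumr; apply: eq_bigr => l _.
by rewrite mul_adj_tens_embrE tens_embr_mulE adjmxE mulrCA mulrA.
Qed.

Lemma cp_ptrace2 : is_cp (@ptrace2 C m v).
Proof.
apply: eq_cp ptrace2_tens_embrE _; apply: cp_sum => c.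
by apply: eq_cp (cp_conj (adjmx (tens_embr 1%:M c))) => Y; rewrite adjmxK.
Qed.

Lemma cp_tensmx X : psdmx X -> is_cp (fun A => A *t X).
Proof.
move=> /psdmx_factor [K ->].
by apply: eq_cp (tensmx_tens_embrE K) _; apply: cp_sum => l; apply: cp_conj.
Qed.

Lemma mxtrace_tensmx A X : \tr (A *t X) = \tr A * \tr X.
Proof.
rewrite /mxtrace sum_mxtens_index mulr_suml; apply: eq_bigr => a _.
by rewrite mulr_sumr; apply: eq_bigr => c _; rewrite tensmxE.
Qed.

Lemma mxtrace_ptrace2 Y : \tr (ptrace2 Y) = \tr Y.
Proof. by rewrite /mxtrace sum_mxtens_index; apply: eq_bigr => a _; rewrite mxE. Qed.

Lemma mxtrace_ptrace1 Y : \tr (ptrace1 Y) = \tr Y.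
Proof.
by rewrite /mxtrace sum_mxtens_index exchange_big; apply: eq_bigr => c _; rewrite mxE.
Qed.

Lemma ptrace1_tensmx A X : ptrace1 (A *t X) = \tr A *: X.
Proof.
by apply/matrixP=> c d; rewrite !mxE mulr_suml; apply: eq_bigr => a _; rewrite tensmxE.
Qed.

Lemma ptrace2_tensmx A X : ptrace2 (A *t X) = \tr X *: A.
Proof.
apply/matrixP=> a b; rewrite !mxE mulr_suml; apply: eq_bigr => c _.
by rewrite tensmxE mulrC.
Qed.

Lemma linear_ptrace2 : is_linear_map (@ptrace2 C m v).
Proof.
move=> a Y Z; apply/matrixP=> i j; rewrite !mxE mulr_sumr -big_split /=.
by apply: eq_bigr => c _; rewrite !mxE.
Qed.

Lemma tensmx_linearl X a A B : (a *: A + B) *t X = a *: (A *t X) + B *t X.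
Proof. by apply/matrixP=> p q; rewrite !mxE mulrDl mulrA. Qed.

End PartialTrace.

Section InstrumentFacts.
Variables (C : numClosedFieldType) (Om : finType) (n m : nat).
Variable I : Om -> 'M[C]_n -> 'M[C]_m.
Hypothesis instI : is_instrument I.

Lemma instrument_linear x : is_linear_map (I x). Proof. by case: instI. Qed.
Lemma instrument_cp x : is_cp (I x). Proof. by case: instI. Qed.
Lemma instrument_tr_sum A : \tr (\sum_x I x A) = \tr A. Proof. by case: instI. Qed.

End InstrumentFacts.

Section ScalarPositivity.
Variable C : numClosedFieldType.

Lemma ge0_real_affine_eq0 (a z : C) :
  0 <= a -> (forall r, r \is Num.real -> 0 <= a + r * z) -> z = 0.
Proof.
move=> a_ge0 affine_ge0; have aR := ger0_real a_ge0.
have zR : z \is Num.real.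
  have := affine_ge0 1 (rpred1 _); rewrite mul1r => /ger0_real azR.
  by have := rpredB azR aR; rewrite addrC addKr.
apply/eqP; apply: contraT => z_neq0.
have rR : - (a + 1) / z \is Num.real by rewrite rpredM ?rpredN ?rpredD ?rpred1 ?rpredV.
have := affine_ge0 _ rR; rewrite mulrAC -mulrA divff // mulr1 opprD addrA subrr add0r.
by rewrite ler0N1.
Qed.

(* Take [t] real, then [t] purely imaginary. *)
Lemma ge0_conj_affine_eq0 (a b c : C) :
  (forall t, 0 <= a + t^* * b + t * c) -> b = 0 /\ c = 0.
Proof.
move=> affine_ge0.
have a_ge0 : 0 <= a by have := affine_ge0 0; rewrite rmorph0 !mul0r !addr0.
have bDc : b + c = 0.
  apply: (ge0_real_affine_eq0 a_ge0) => r rR.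
  by have := affine_ge0 r; rewrite conj_Creal // -addrA -mulrDr.
have cBb : 'i * (c - b) = 0.
  apply: (ge0_real_affine_eq0 a_ge0) => r rR; have := affine_ge0 ('i * r).
  rewrite rmorphM /= (conj_Creal rR) conjCi -addrA !mulNr [- _ + _]addrC -mulrBr.
  by rewrite -mulrA mulrCA.
have eq_bc : b = c.
  by move/eqP: cBb; rewrite mulf_eq0 (negbTE (neq0Ci _)) subr_eq0 => /eqP.
rewrite -eq_bc; suff -> : b = 0 by [].
by move: bDc; rewrite -eq_bc -mulr2n => /eqP; rewrite mulrn_eq0 => /eqP.
Qed.

End ScalarPositivity.

Section Compression.
Variables (C : numClosedFieldType) (n m : nat).
Variables (F : 'M[C]_n -> 'M[C]_m) (B P Q : 'M[C]_n).
Hypothesis linF : is_linear_map F.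
Hypothesis posF : forall rho, psdmx rho -> psdmx (F rho).
Hypothesis trF : forall rho, psdmx rho -> \tr (F rho) <= \tr (B *m rho).
Hypothesis hermP : adjmx P = P.
Hypothesis hermQ : adjmx Q = Q.
Hypothesis PQ1 : P + Q = 1%:M.
Hypothesis BQ0 : B *m Q = 0.

Lemma compress_compl_eq0 rho : psdmx rho -> F (Q *m rho *m Q) = 0.
Proof.
move=> psdrho.
have psdQrhoQ : psdmx (Q *m rho *m Q) by rewrite -{2}hermQ; apply: psdmx_conj.
apply: psdmx_tr_eq0; first exact: posF.
apply/eqP; rewrite eq_le (psdmx_tr_ge0 (posF psdQrhoQ)) andbT.
by have := trF psdQrhoQ; rewrite !mulmxA BQ0 !mul0mx mxtrace0.
Qed.

(* Positivity of [F] on [(P + t Q) rho (P + t Q)^*] for every scalar [t]. *)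
Lemma compress_cross_eq0 rho :
  psdmx rho -> F (P *m rho *m Q) = 0 /\ F (Q *m rho *m P) = 0.
Proof.
move=> psdrho.
suff qform0 w : qform (F (P *m rho *m Q)) w = 0 /\ qform (F (Q *m rho *m P)) w = 0.
  by split; apply: qform_eq0 => w; case: (qform0 w).
apply: (@ge0_conj_affine_eq0 _ (qform (F (P *m rho *m P)) w)) => t.
have [_] := posF (psdmx_conj (P + t *: Q) psdrho).
have -> : (P + t *: Q) *m rho *m adjmx (P + t *: Q) = P *m rho *m P
    + t^* *: (P *m rho *m Q) + t *: (Q *m rho *m P) + (t * t^*) *: (Q *m rho *m Q).
  rewrite adjmxD adjmxZ hermP hermQ !mulmxDl !mulmxDr -!scalemxAl -!scalemxAr.
  by rewrite !scalerA !addrA.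
rewrite !(linear_mapD linF) !(linear_mapZ linF) compress_compl_eq0 // scaler0 addr0.
by move=> /(_ w); rewrite -/(qform _ _) !qformD !qformZ.
Qed.

Lemma linear_map_compress A : F A = F (P *m A *m P).
Proof.
have psd_state rho : is_state rho -> psdmx rho by case.
have eq0_sandwich L R : (forall rho, psdmx rho -> F (L *m rho *m R) = 0) ->
    F (L *m A *m R) = 0.
  move=> h0; apply: (linear_map_states_eq0 (linear_map_sandwich L R linF)) => rho.
  by move/psd_state/h0.
transitivity (F ((P + Q) *m A *m (P + Q))); first by rewrite PQ1 mul1mx mulmx1.
rewrite !mulmxDl !mulmxDr !(linear_mapD linF).
rewrite (eq0_sandwich Q Q) ?(eq0_sandwich P Q) ?(eq0_sandwich Q P) ?addr0 //.
- by move=> rho /compress_cross_eq0 [].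
- by move=> rho /compress_cross_eq0 [].
- exact: compress_compl_eq0.
Qed.

End Compression.

Section Luders.
Variables (C : numClosedFieldType) (Lam : finType) (n : nat).
Variables (B sqrtB : Lam -> 'M[C]_n).
Hypothesis sqrtBP : forall y, is_psd_sqrt (sqrtB y) (B y).

Lemma cp_luders y : is_cp (luders sqrtB y).
Proof. by apply: cp_herm_conj; apply: psdmx_herm; case: (sqrtBP y). Qed.

Lemma mxtrace_luders y A : \tr (luders sqrtB y A) = \tr (B y *m A).
Proof. by rewrite mxtrace_mulC mulmxA; case: (sqrtBP y) => _ ->. Qed.

End Luders.

Section JointInstrument.
Variables (C : numClosedFieldType) (Om Lam : finType) (n m v : nat).
Variables (B sqrtB : Lam -> 'M[C]_n) (xi : Lam -> 'M[C]_v).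
Variable Rr : Lam -> Om -> 'M[C]_n -> 'M[C]_m.
Hypothesis povmB : is_povm B.
Hypothesis sqrtBP : forall y, is_psd_sqrt (sqrtB y) (B y).
Hypothesis state_xi : forall y, is_state (xi y).
Hypothesis instR : forall y, is_instrument (Rr y).

Definition joint_instrument (p : Om * Lam) (A : 'M[C]_n) : 'M[C]_(m * v) :=
  Rr p.2 p.1 (luders sqrtB p.2 A) *t xi p.2.

Let tr_xi y : \tr (xi y) = 1. Proof. by case: (state_xi y). Qed.

Lemma sum_ptrace1_joint y A :
  \sum_x ptrace1 (joint_instrument (x, y) A) = \tr (B y *m A) *: xi y.
Proof.
under eq_bigr do rewrite ptrace1_tensmx.
by rewrite /= -scaler_suml -mxtrace_sum (instrument_tr_sum (instR y)) (mxtrace_luders sqrtBP).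
Qed.

Lemma sum_ptrace2_joint x A :
  \sum_y ptrace2 (joint_instrument (x, y) A) = \sum_y Rr y x (luders sqrtB y A).
Proof. by apply: eq_bigr => y _; rewrite ptrace2_tensmx tr_xi scale1r. Qed.

Lemma is_instrument_joint : is_instrument joint_instrument.
Proof.
have cp_joint p : is_cp (joint_instrument p).
  case: p => x y; apply: (cp_comp (f := fun Y => Y *t xi y)).
    by apply: cp_tensmx; case: (state_xi y).
  by apply: cp_comp; [apply: instrument_cp | apply: cp_luders].
have tr_joint A : \tr (\sum_p joint_instrument p A) = \tr A.
  have -> : \sum_p joint_instrument p A = \sum_x \sum_y joint_instrument (x, y) A.
    by rewrite pair_big; apply: eq_bigr => -[].
  rewrite exchange_big -[in RHS](mul1mx A) -(proj2 povmB) mulmx_suml !mxtrace_sum.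
  apply: eq_bigr => y _; rewrite -(mxtrace_luders sqrtBP) -(instrument_tr_sum (instR y)).
  by rewrite !mxtrace_sum; apply: eq_bigr => x _; rewrite mxtrace_tensmx tr_xi mulr1.
split => //; last exact: cp_tr_sum_le.
move=> [x y] a A A' /=; rewrite /joint_instrument /luders /=.
by rewrite (linear_map_sandwich _ _ (instrument_linear (instR y) x)) tensmx_linearl.
Qed.

End JointInstrument.

Lemma postprocessing_compatible (C : numClosedFieldType) (Om Lam : finType) (n m v : nat)
    (I : Om -> 'M[C]_n -> 'M[C]_m) (B : Lam -> 'M[C]_n)
    (J : Lam -> 'M[C]_n -> 'M[C]_v) (sqrtB : Lam -> 'M[C]_n) :
  is_povm B -> is_measure_and_prepare B J ->
  (forall y, is_psd_sqrt (sqrtB y) (B y)) ->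
  postprocessing I (luders sqrtB) -> compatible I J.
Proof.
move=> povmB [xi [state_xi Jxi]] sqrtBP [Rr [instR IR]].
exists (joint_instrument sqrtB xi Rr); split.
- exact: (is_instrument_joint povmB sqrtBP state_xi instR).
- by move=> rho _ y; rewrite (sum_ptrace1_joint _ sqrtBP instR) Jxi.
- by move=> rho _ x; rewrite (sum_ptrace2_joint _ _ state_xi) IR.
Qed.

Section LudersPostprocessing.
Variables (C : numClosedFieldType) (Om Lam : finType) (n m v : nat).
Variables (I : Om -> 'M[C]_n -> 'M[C]_m) (B sqrtB : Lam -> 'M[C]_n) (xi : Lam -> 'M[C]_v).
Variable G : Om * Lam -> 'M[C]_n -> 'M[C]_(m * v).
Hypothesis instI : is_instrument I.
Hypothesis sqrtBP : forall y, is_psd_sqrt (sqrtB y) (B y).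
Hypothesis tr_xi : forall y, \tr (xi y) = 1.
Hypothesis instG : is_instrument G.
Hypothesis G_J : forall rho, is_state rho -> forall y,
  \sum_x ptrace1 (G (x, y) rho) = \tr (B y *m rho) *: xi y.
Hypothesis G_I : forall rho, is_state rho -> forall x,
  \sum_y ptrace2 (G (x, y) rho) = I x rho.

Definition marginal x y A := ptrace2 (G (x, y) A).

Lemma linear_marginal x y : is_linear_map (marginal x y).
Proof. by move=> a A A'; rewrite /marginal (instrument_linear instG) linear_ptrace2. Qed.

Lemma cp_marginal x y : is_cp (marginal x y).
Proof. by apply: cp_comp; [apply: cp_ptrace2 | apply: instrument_cp]. Qed.

Lemma sum_marginal x A : \sum_y marginal x y A = I x A.
Proof.
apply/eqP; rewrite -subr_eq0; apply/eqP; move: A; apply: linear_map_states_eq0.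
- move=> a A A'; rewrite (instrument_linear instI).
  under eq_bigr do rewrite linear_marginal; rewrite big_split /= -scaler_sumr.
  by rewrite scalerBr opprD addrACA.
- by move=> rho state_rho; rewrite G_I // subrr.
Qed.

Lemma sum_tr_marginal y A : \sum_x \tr (marginal x y A) = \tr (B y *m A).
Proof.
apply/eqP; rewrite -subr_eq0; apply/eqP; move: A.
apply: (linear_map_states_eq0 (V := C^o)).
- move=> a A A'; under eq_bigr do rewrite linear_marginal mxtraceD mxtraceZ.
  rewrite big_split /= -mulr_sumr mulmxDr -scalemxAr mxtraceD mxtraceZ.
  by rewrite opprD addrACA -mulrBr.
- move=> rho state_rho; under eq_bigr do rewrite mxtrace_ptrace2 -mxtrace_ptrace1.
  by rewrite -mxtrace_sum G_J // mxtraceZ tr_xi mulr1 subrr.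
Qed.

Local Notation T y := (psd_pinv (sqrtB y)).
Local Notation P y := (psd_supp (sqrtB y)).
Local Notation Q y := (1%:M - psd_supp (sqrtB y)).

Let psd_sqrtB y : psdmx (sqrtB y). Proof. by case: (sqrtBP y). Qed.
Let sqrtBK y : sqrtB y *m sqrtB y = B y. Proof. by case: (sqrtBP y). Qed.
Let hermT y : adjmx (T y) = T y := adjmx_psd_pinv (psd_sqrtB y).
Let hermP y : adjmx (P y) = P y := adjmx_psd_supp (psd_sqrtB y).
Let hermQ y : adjmx (Q y) = Q y. Proof. by rewrite adjmxB adjmx1 hermP. Qed.
Let PP y : P y *m P y = P y := psd_supp_idem (psd_sqrtB y).
Let TS y : T y *m sqrtB y = P y := mul_pinv_psd (psd_sqrtB y).
Let ST y : sqrtB y *m T y = P y := mul_psd_pinv (psd_sqrtB y).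
Let QS y : Q y *m sqrtB y = 0.
Proof. by rewrite mulmxBl mul1mx (mul_supp_psd (psd_sqrtB y)) subrr. Qed.
Let SQ y : sqrtB y *m Q y = 0.
Proof. by rewrite mulmxBr mulmx1 (mul_psd_supp (psd_sqrtB y)) subrr. Qed.

Lemma marginal_compress x y A : marginal x y A = marginal x y (P y *m A *m P y).
Proof.
apply: (linear_map_compress (B := B y) (Q := Q y) (linear_marginal x y)).
- by move=> rho; apply: cp_psd (cp_marginal x y).
- move=> rho psdrho; rewrite -sum_tr_marginal (bigD1 x) //= lerDl.
  by apply: sumr_ge0 => x' _; apply/psdmx_tr_ge0/(cp_psd (cp_marginal x' y)).
- exact: hermP.
- exact: hermQ.
- by rewrite addrC subrK.
- by rewrite -sqrtBK -mulmxA SQ mulmx0.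
Qed.

Definition luders_postproc y x A :=
  marginal x y (T y *m A *m T y) + I x (Q y *m A *m Q y).

Lemma is_instrument_luders_postproc y : is_instrument (luders_postproc y).
Proof.
have cp_post x : is_cp (luders_postproc y x).
  apply: cp_add.
    exact/(cp_comp (cp_marginal x y))/cp_herm_conj/hermT.
  exact/(cp_comp (instrument_cp instI x))/cp_herm_conj/hermQ.
have tr_post A : \tr (\sum_x luders_postproc y x A) = \tr A.
  rewrite mxtrace_sum; under eq_bigr do rewrite mxtraceD.
  rewrite big_split /= sum_tr_marginal -mxtrace_sum (instrument_tr_sum instI).
  have QQ : Q y *m Q y = Q y by rewrite mulmxBl mul1mx mulmxBr mulmx1 PP subrr subr0.
  have TBT : T y *m B y *m T y = P y.
    rewrite -sqrtBK (_ : _ *m _ *m T y = (T y *m sqrtB y) *m (sqrtB y *m T y)).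
      by rewrite TS ST PP.
    by rewrite !mulmxA.
  rewrite mxtrace_sandwichC TBT -[Q y *m A *m Q y]mul1mx mxtrace_sandwichC mulmx1 QQ.
  by rewrite -mxtraceD -mulmxDr addrC subrK mulmx1.
split => //; last exact: cp_tr_sum_le.
move=> x a A A'; rewrite /luders_postproc (linear_map_sandwich _ _ (linear_marginal x y)).
by rewrite (linear_map_sandwich _ _ (instrument_linear instI x)) scalerDr addrACA.
Qed.

Lemma sum_luders_postproc x A :
  \sum_y luders_postproc y x (luders sqrtB y A) = I x A.
Proof.
rewrite -sum_marginal; apply: eq_bigr => y _; rewrite /luders_postproc /luders.
have sandwichE (L : 'M[C]_n) :
    L *m (sqrtB y *m A *m sqrtB y) *m L = (L *m sqrtB y) *m A *m (sqrtB y *m L).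
  by rewrite !mulmxA.
rewrite !sandwichE TS ST QS !mul0mx (linear_map0 (instrument_linear instI x)) addr0.
by rewrite -marginal_compress.
Qed.

End LudersPostprocessing.

Lemma compatible_postprocessing (C : numClosedFieldType) (Om Lam : finType) (n m v : nat)
    (I : Om -> 'M[C]_n -> 'M[C]_m) (B : Lam -> 'M[C]_n)
    (J : Lam -> 'M[C]_n -> 'M[C]_v) (sqrtB : Lam -> 'M[C]_n) :
  is_instrument I -> is_measure_and_prepare B J ->
  (forall y, is_psd_sqrt (sqrtB y) (B y)) ->
  compatible I J -> postprocessing I (luders sqrtB).
Proof.
move=> instI [xi [state_xi Jxi]] sqrtBP [G [instG G_J G_I]].
have tr_xi y : \tr (xi y) = 1 by case: (state_xi y).
have G_J' rho : is_state rho -> forall y,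
    \sum_x ptrace1 (G (x, y) rho) = \tr (B y *m rho) *: xi y.
  by move=> state_rho y; rewrite G_J // Jxi.
exists (luders_postproc I sqrtB G); split.
- exact: (is_instrument_luders_postproc instI sqrtBP tr_xi instG G_J').
- by move=> x A; rewrite (sum_luders_postproc instI sqrtBP tr_xi instG G_J' G_I).
Qed.

Local Open Scope complex_scope.

Theorem corollary5 (R : realType) (Om Lam : finType) (n m v : nat)
    (I : Om -> 'M[R[i]]_n -> 'M[R[i]]_m)
    (B : Lam -> 'M[R[i]]_n)
    (J : Lam -> 'M[R[i]]_n -> 'M[R[i]]_v)
    (sqrtB : Lam -> 'M[R[i]]_n) :
  is_instrument I ->
  is_povm B ->
  is_instrument J ->
  is_measure_and_prepare B J ->
  (forall y, is_psd_sqrt (sqrtB y) (B y)) ->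
  (compatible I J <-> postprocessing I (luders sqrtB)).
Proof.
move=> instI povmB _ mpJ sqrtBP; split.
- exact: (compatible_postprocessing instI mpJ sqrtBP).
- exact: (postprocessing_compatible povmB mpJ sqrtBP).
Qed.
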